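(* Let $(\mathfrak M,w)=(W,R,V,w)$ be a pointed model, and let $Unr_w(\mathfrak M)=(W',R',V')$ and $Unr^{re}_w(\mathfrak M)=(W',R^*,V')$ be its unravelling and reflexive unravelling from $w$. Then: (1) for every $\varphi\in Form$ and $(s_0,\dots,s_n)\in W'$: $Unr_w(\mathfrak M),(s_0,\dots,s_n)\models\varphi$ iff $\mathfrak M,s_n\models\varphi$; (2) if $R$ is reflexive, then for every $\varphi\in Form$ and $(s_0,\dots,s_n)\in W'$: $Unr^{re}_w(\mathfrak M),(s_0,\dots,s_n)\models\varphi$ iff $\mathfrak M,s_n\models\varphi$; (3) if $\mathfrak M\in\mathcal D_{P-}$, then $Unr_w(\mathfrak M)$ is an interpretation; (4) if $R$ is reflexive, then $Unr^{re}_w(\mathfrak M)$ is an interpretation with reflexive relation.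
   Context: $Form$: $\varphi::=p\mid\bot\mid(\varphi\wedge\varphi)\mid(\varphi\to\varphi)$ over a countable set $P0$. A model is $(W,R,V)$ with $W\neq\emptyset$, $R\subseteq W\times W$, $V:P0\to\wp(W)$. Satisfaction: $\bot$ never true; $p$ true at $s$ iff $s\in V(p)$; $\wedge$ pointwise; $\mathfrak M,s\models\varphi\to\psi$ iff for all $t$ with $sRt$, $\mathfrak M,t\models\varphi$ implies $\mathfrak M,t\models\psi$. For $X\subseteq W$: $-X=W\setminus X$, $R[X]=\{t:\exists s\in X,\ sRt\}$, $R^\Box(X)=\{s:\forall t\,(sRt\Rightarrow t\in X)\}$. A proposition of $(W,R)$ is $X\subseteq W$ with $R[X]\cap R^\Box(R[X])\subseteq X$; an interpretation is a model with every $V(p)$ a proposition. $\mathcal D_{P-}$ is the class of models with $V(p)\subseteq R^\Box(-R^\Box(\emptyset)\cup V(p))$ for all $p\in P0$. Unravelling: $W'$ is the set of finite sequences $(s_0,\dots,s_n)$, $n\in\mathbb N$, of elements of $W$ with $s_0=w$ and $s_iRs_{i+1}$ for $0\le i<n$; $(s_0,\dots,s_n)R'(t_0,\dots,t_m)$ iff $m=n+1$ and $(t_0,\dots,t_n)=(s_0,\dots,s_n)$; $V'(p)=\{(s_0,\dots,s_n)\in W':s_n\in V(p)\}$. $R^*$ is the reflexive closure of $R'$. *)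

From Stdlib Require Import List.
Import ListNotations.
Set Implicit Arguments.

Inductive form : Type :=
| Var : nat -> form
| Bot : form
| And : form -> form -> form
| Imp : form -> form -> form.

(* Satisfaction in a model (W,R,V); W nonempty is ensured by the point w. *)
Fixpoint sat (W : Type) (R : W -> W -> Prop) (V : nat -> W -> Prop)
  (s : W) (phi : form) : Prop :=
  match phi with
  | Var p => V p s
  | Bot => False
  | And a b => sat R V s a /\ sat R V s b
  | Imp a b => forall t, R s t -> sat R V t a -> sat R V t b
  end.

Definition setC (W : Type) (X : W -> Prop) : W -> Prop := fun s => ~ X s.
Definition setU (W : Type) (X Y : W -> Prop) : W -> Prop := fun s => X s \/ Y s.
Definition setI (W : Type) (X Y : W -> Prop) : W -> Prop := fun s => X s /\ Y s.
Definition set0 (W : Type) : W -> Prop := fun _ => False.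
Definition subset (W : Type) (X Y : W -> Prop) : Prop := forall s, X s -> Y s.

Definition Rimg (W : Type) (R : W -> W -> Prop) (X : W -> Prop) : W -> Prop :=
  fun t => exists s, X s /\ R s t.
Definition Rbox (W : Type) (R : W -> W -> Prop) (X : W -> Prop) : W -> Prop :=
  fun s => forall t, R s t -> X t.

Definition is_proposition (W : Type) (R : W -> W -> Prop) (X : W -> Prop) : Prop :=
  subset (setI (Rimg R X) (Rbox R (Rimg R X))) X.

Definition interpretation (W : Type) (R : W -> W -> Prop) (V : nat -> W -> Prop) : Prop :=
  forall p, is_proposition R (V p).

Definition in_DPminus (W : Type) (R : W -> W -> Prop) (V : nat -> W -> Prop) : Prop :=
  forall p, subset (V p) (Rbox R (setU (setC (Rbox R (@set0 W))) (V p))).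

Definition reflexive (W : Type) (R : W -> W -> Prop) : Prop := forall s, R s s.

Fixpoint chain (W : Type) (R : W -> W -> Prop) (l : list W) : Prop :=
  match l with
  | [] => True
  | x :: l' => match l' with
               | [] => True
               | y :: _ => R x y /\ chain R l'
               end
  end.

Definition is_unr_point (W : Type) (R : W -> W -> Prop) (w : W) (l : list W) : Prop :=
  (exists l', l = w :: l') /\ chain R l.

Definition UnrW (W : Type) (R : W -> W -> Prop) (w : W) : Type :=
  { l : list W | is_unr_point R w l }.

Definition lastel (W : Type) (R : W -> W -> Prop) (w : W) (s : UnrW R w) : W :=
  last (proj1_sig s) w.

Definition UnrR (W : Type) (R : W -> W -> Prop) (w : W) (s t : UnrW R w) : Prop :=
  length (proj1_sig t) = S (length (proj1_sig s)) /\
  firstn (length (proj1_sig s)) (proj1_sig t) = proj1_sig s.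

Definition UnrV (W : Type) (R : W -> W -> Prop) (V : nat -> W -> Prop) (w : W)
  (p : nat) (s : UnrW R w) : Prop := V p (lastel s).

Definition UnrRre (W : Type) (R : W -> W -> Prop) (w : W) (s t : UnrW R w) : Prop :=
  UnrR s t \/ s = t.

(* The last-element map lastel is a bounded morphism from Unr_w(M) to M, and
   also from the reflexive unravelling when R is reflexive; bounded morphisms
   preserve truth, which gives (1) and (2).
   For (3) and (4) the point is that in the unravelling every sequence has at
   most one R'-predecessor: if t lies in R'[V'(p)] and in the box of it and t
   has any successor, that successor's unique predecessor is t itself, so t is
   in V'(p); the only remaining case, s_n without successors, is excluded by
   the D_{P-} condition, and cannot occur at all when R is reflexive. *)

From Stdlib Require Import List Arith Classical ProofIrrelevance Lia.
Import ListNotations.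
Set Implicit Arguments.

Section BoundedMorphism.

Variables (W1 W2 : Type) (R1 : W1 -> W1 -> Prop) (R2 : W2 -> W2 -> Prop).
Variables (V1 : nat -> W1 -> Prop) (V2 : nat -> W2 -> Prop) (f : W1 -> W2).

Hypothesis f_forth : forall x y, R1 x y -> R2 (f x) (f y).
Hypothesis f_back : forall x v, R2 (f x) v -> exists y, R1 x y /\ f y = v.
Hypothesis f_val : forall p x, V1 p x <-> V2 p (f x).

Lemma sat_bounded_morphism (phi : form) (x : W1) :
  sat R1 V1 x phi <-> sat R2 V2 (f x) phi.
Proof.
  revert x; induction phi as [p| |a IHa b IHb|a IHa b IHb]; intro x; simpl.
  - apply f_val.
  - tauto.
  - rewrite IHa, IHb; tauto.
  - split.
    + intros H v Hxv Hav.
      destruct (f_back Hxv) as [y [Hxy <-]].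
      apply IHb, H; [exact Hxy | apply IHa, Hav].
    + intros H y Hxy Hay.
      apply IHb, H; [apply f_forth, Hxy | apply IHa, Hay].
Qed.

End BoundedMorphism.

Lemma Rbox_Rimg_unique_pred (W : Type) (R : W -> W -> Prop) (X : W -> Prop) (t u : W) :
  (forall x y, R x u -> R y u -> x = y) ->
  Rbox R (Rimg R X) t -> R t u -> X t.
Proof.
  intros Hpred Hbox Htu.
  destruct (Hbox u Htu) as [y [Xy Hyu]].
  rewrite <- (Hpred y t Hyu Htu); exact Xy.
Qed.

Section Unravelling.

Variables (W : Type) (R : W -> W -> Prop) (w : W).

Lemma chain_snoc (x : W) (l : list W) (t : W) :
  chain R (x :: l ++ [t]) <-> chain R (x :: l) /\ R (last (x :: l) w) t.
Proof.
  revert x; induction l as [|y l IH]; intro x; simpl.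
  - tauto.
  - rewrite (IH y); destruct l; simpl; tauto.
Qed.

Lemma UnrR_snoc (s t : UnrW R w) :
  UnrR s t -> exists u, proj1_sig t = proj1_sig s ++ [u].
Proof.
  intros [Hlen Hpre].
  rewrite <- (firstn_skipn (length (proj1_sig s)) (proj1_sig t)), Hpre.
  assert (Hrest : length (skipn (length (proj1_sig s)) (proj1_sig t)) = 1)
    by (rewrite length_skipn; lia).
  destruct (skipn _ _) as [|u [|]]; try discriminate.
  exists u; reflexivity.
Qed.

Definition unr_extend (s : UnrW R w) (t : W) (Ht : R (lastel s) t) : UnrW R w.
Proof.
  exists (proj1_sig s ++ [t]).
  destruct s as [l [[l' ->] Hc]]; split.
  - exists (l' ++ [t]); reflexivity.
  - apply chain_snoc; split; assumption.
Defined.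

Lemma UnrR_extend (s : UnrW R w) t (Ht : R (lastel s) t) :
  UnrR s (unr_extend s Ht).
Proof.
  unfold UnrR; simpl; rewrite length_app; split; [simpl; lia|].
  rewrite firstn_app, firstn_all, Nat.sub_diag; apply app_nil_r.
Qed.

Lemma lastel_extend (s : UnrW R w) t (Ht : R (lastel s) t) :
  lastel (unr_extend s Ht) = t.
Proof. apply last_last. Qed.

Lemma UnrR_lastel (s t : UnrW R w) : UnrR s t -> R (lastel s) (lastel t).
Proof.
  intro Hst; destruct (UnrR_snoc Hst) as [u Ht]; clear Hst.
  destruct t as [lt [Ht0 Hc]], s as [ls [[l' ->] Hs0]]; simpl in Ht; subst lt.
  unfold lastel; simpl proj1_sig; rewrite app_comm_cons, last_last.
  exact (proj2 (proj1 (chain_snoc w l' u) Hc)).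
Qed.

Lemma UnrR_back (s : UnrW R w) (t : W) :
  R (lastel s) t -> exists s', UnrR s s' /\ lastel s' = t.
Proof.
  intro Ht; exists (unr_extend s Ht); split.
  - apply UnrR_extend.
  - apply lastel_extend.
Qed.

Lemma UnrR_pred_unique (x y t : UnrW R w) : UnrR x t -> UnrR y t -> x = y.
Proof.
  intros [Hx Hfx] [Hy Hfy].
  assert (Hlen : length (proj1_sig x) = length (proj1_sig y)) by lia.
  destruct x as [lx px], y as [ly py]; simpl in *.
  apply subset_eq_compat.
  rewrite <- Hfx, <- Hfy, Hlen; reflexivity.
Qed.

Variable V : nat -> W -> Prop.

Lemma sat_unravelling (phi : form) (s : UnrW R w) :
  sat (@UnrR W R w) (UnrV V (w:=w)) s phi <-> sat R V (lastel s) phi.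
Proof.
  apply sat_bounded_morphism.
  - exact UnrR_lastel.
  - exact UnrR_back.
  - reflexivity.
Qed.

Lemma sat_refl_unravelling (phi : form) (s : UnrW R w) :
  reflexive R ->
  sat (@UnrRre W R w) (UnrV V (w:=w)) s phi <-> sat R V (lastel s) phi.
Proof.
  intro Hrefl; apply sat_bounded_morphism.
  - intros x y [Hxy | <-]; [apply UnrR_lastel, Hxy | apply Hrefl].
  - intros x v Hxv; destruct (@UnrR_back x v Hxv) as [y [Hxy Hy]].
    exists y; split; [left|]; assumption.
  - reflexivity.
Qed.

Lemma unravelling_interpretation :
  in_DPminus R V -> interpretation (@UnrR W R w) (UnrV V (w:=w)).
Proof.
  intros HD p t [[x [Vx Hxt]] Hbox]; unfold UnrV in *.
  destruct (HD p _ Vx _ (UnrR_lastel Hxt)) as [Hsucc | Vt]; [|exact Vt].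
  destruct (classic (V p (lastel t))) as [Vt | nVt]; [exact Vt|].
  exfalso; apply Hsucc; intros u Hu; apply nVt.
  exact (Rbox_Rimg_unique_pred _ (fun x y => @UnrR_pred_unique x y _) Hbox (UnrR_extend t Hu)).
Qed.

Lemma refl_unravelling_interpretation :
  reflexive R -> interpretation (@UnrRre W R w) (UnrV V (w:=w)).
Proof.
  intros Hrefl p t [_ Hbox].
  assert (Htu := UnrR_extend t (Hrefl (lastel t))).
  destruct (Hbox _ (or_introl Htu)) as [y [Vy [Hyu | ->]]].
  - rewrite <- (UnrR_pred_unique Hyu Htu); exact Vy.
  - unfold UnrV in *; rewrite lastel_extend in Vy; exact Vy.
Qed.

End Unravelling.

Theorem mainTheorem15 (W : Type) (R : W -> W -> Prop) (V : nat -> W -> Prop) (w : W) :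
  (forall (phi : form) (s : UnrW R w),
      sat (@UnrR W R w) (UnrV V (w:=w)) s phi <-> sat R V (lastel s) phi) /\
  (reflexive R ->
   forall (phi : form) (s : UnrW R w),
      sat (@UnrRre W R w) (UnrV V (w:=w)) s phi <-> sat R V (lastel s) phi) /\
  (in_DPminus R V -> interpretation (@UnrR W R w) (UnrV V (w:=w))) /\
  (reflexive R ->
   interpretation (@UnrRre W R w) (UnrV V (w:=w)) /\ reflexive (@UnrRre W R w)).
Proof.
  split; [|split; [|split]].
  - apply sat_unravelling.
  - intros Hrefl phi s; apply sat_refl_unravelling, Hrefl.
  - apply unravelling_interpretation.
  - intro Hrefl; split.
    + apply refl_unravelling_interpretation, Hrefl.
    + intro s; right; reflexivity.
Qed.
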